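(* Let $N\ge 2$, $n\ge1$. Let $\{\mathcal{G}_k : k\in\mathcal{P}\}$, $\mathcal{P}=\{1,\ldots,Q\}$, be a finite family of weighted digraphs on the node set $\{1,\ldots,N\}$ with weights $a^k_{ij}\ge0$, $a^k_{ii}=0$, and let $\sigma:[0,\infty)\to\mathcal{P}$ be a right-continuous, piecewise constant switching signal whose consecutive switching instants are separated by at least a dwell time $T_{\min}>0$. Assume there exists $T>0$ such that for every $t_0\ge0$ the union graph $\bigcup_{t\in[t_0,t_0+T)}\mathcal{G}_{\sigma(t)}$ contains a directed spanning tree. Let $f:\mathbb{R}^n\to\mathbb{R}^n$ be continuous, $\Gamma$ a positive definite diagonal $n\times n$ matrix, and suppose there exist positive definite diagonal matrices $Q=\mathrm{diag}\{q^1,\ldots,q^n\}$ and $\Sigma=\mathrm{diag}\{\delta^1,\ldots,\delta^n\}$ such that for all $x,y\in\mathbb{R}^n$, $$(x-y)^{\mathrm{T}}Q\big(f(x)-f(y)-\Sigma x+\Sigma y\big)\ge 0.$$ Consider, for a coupling strength $\phi>0$, $$\dot{x}_i=f(x_i)+\phi\sum_{j=1}^N a_{ij}^{\sigma(t)}\Gamma(x_j-x_i),\qquad i=1,\ldots,N.$$ Then synchronization cannot be reached if $\phi$ is sufficiently small: there exists $\phi_*>0$ such that for every $\phi\in(0,\phi_* )$ the system does not achieve synchronization (i.e., it is not true that $\lim_{t\to\infty}\|x_i(t)-x_j(t)\|=0$ for all $i,j$ and all initial conditions).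
   Context: For a weighted digraph with weights $a_{ij}\ge0$, $a_{ij}>0$ means that $(j,i)$ is an edge (information flows from $j$ to $i$). A directed path is a sequence of edges $(i_1,i_2),(i_2,i_3),\ldots,(i_{q-1},i_q)$. A digraph contains a directed spanning tree if some node has a directed path to every other node. The union of a family of graphs on the same node set has as edge set the union of their edge sets. *)

From HB Require Import structures.
From mathcomp Require Import all_boot all_order all_algebra.
From mathcomp Require Import all_classical all_reals all_analysis.
Set Implicit Arguments. Unset Strict Implicit. Unset Printing Implicit Defensive.
Import Order.TTheory GRing.Theory Num.Theory.
Import numFieldNormedType.Exports.
Local Open Scope classical_set_scope.
Local Open Scope ring_scope.

Section Defs.
Variable R : realType.

Definition posdef n (M : 'M[R]_n) : Prop :=
  forall v : 'cV[R]_n, v != 0 -> 0 < (v^T *m M *m v) ord0 ord0.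

Definition enorm n (v : 'cV[R]_n) : R := Num.sqrt (\sum_(l < n) v l ord0 ^+ 2).

(* Weighted digraph family: a k i j >= 0 is the weight of edge (j,i) in G_k. *)
Definition switching_instant Qn (sigma : R -> 'I_Qn) (t : R) : Prop :=
  0 < t /\ forall e, 0 < e -> exists r, t - e < r /\ r < t /\ sigma r <> sigma t.

Definition dwell_signal Qn (sigma : R -> 'I_Qn) (Tmin : R) : Prop :=
  [/\ 0 < Tmin,
      (forall t, 0 <= t -> exists2 e, 0 < e &
          forall r, t <= r -> r < t + e -> sigma r = sigma t),
      (forall t, 0 < t -> exists2 e, 0 < e &
          forall r r', t - e < r -> r < t -> t - e < r' -> r' < t -> sigma r = sigma r')
    & (forall s1 s2, switching_instant sigma s1 -> switching_instant sigma s2 ->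
          s1 < s2 -> Tmin <= s2 - s1)].

Definition union_edge N Qn (a : 'I_Qn -> 'I_N -> 'I_N -> R) (sigma : R -> 'I_Qn)
  (t0 T : R) : rel 'I_N :=
  fun j i => `[< exists t, [/\ t0 <= t, t < t0 + T & 0 < a (sigma t) i j] >].

Definition has_spanning_tree N (e : rel 'I_N) : Prop :=
  exists r : 'I_N, forall i : 'I_N, i != r ->
    exists p : seq 'I_N, path e r p /\ last r p = i.

Definition rhs N n Qn (f : 'cV[R]_n -> 'cV[R]_n) (Gamma : 'M[R]_n)
  (a : 'I_Qn -> 'I_N -> 'I_N -> R) (sigma : R -> 'I_Qn) (phi : R)
  (x : 'I_N -> 'cV[R]_n) (t : R) (i : 'I_N) : 'cV[R]_n :=
  f (x i) + phi *: \sum_(j < N) a (sigma t) i j *: (Gamma *m (x j - x i)).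

(* a (Caratheodory) solution on [0, +oo): continuous on [0,+oo) and satisfying
   the ODE at every t > 0 that is not a switching instant *)
Definition is_solution N n Qn f Gamma a sigma phi (x : R -> 'I_N -> 'cV[R]_n) : Prop :=
  (forall i, {within [set t : R | 0 <= t], continuous (fun t => x t i)}) /\
  (forall t, 0 < t -> ~ switching_instant sigma t -> forall i,
      is_derive t 1 (fun s => x s i) (@rhs N n Qn f Gamma a sigma phi (x t) t i)).

Definition synchronizes N n Qn f Gamma a sigma phi : Prop :=
  (forall x0 : 'I_N -> 'cV[R]_n, exists x : R -> 'I_N -> 'cV[R]_n,
      @is_solution N n Qn f Gamma a sigma phi x /\ x 0 = x0) /\
  (forall x : R -> 'I_N -> 'cV[R]_n, @is_solution N n Qn f Gamma a sigma phi x ->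
      forall i j, (fun t => enorm (x t i - x t j)) @ +oo --> (0 : R)).

End Defs.

(* The weighted disagreement V(x) = sum_(i,j) (x_i - x_j)^T Q (x_i - x_j) is a
   Lyapunov function that cannot decrease under weak coupling.  By the QUAD
   condition the uncoupled part of dV/dt is at least 2 m V, where m bounds the
   diagonal of Sigma from below, while the coupling part is at least - 2 phi K V
   for a constant K depending only on the weights, Gamma and the dimensions.
   Hence for phi < m / K the derivative of V along any solution is nonnegative
   between switching instants; continuity and the dwell time make V
   nondecreasing on [0, +oo), so a solution started with V > 0 never
   synchronizes. *)

From HB Require Import structures.
From mathcomp Require Import all_boot all_order all_algebra.
From mathcomp Require Import all_classical all_reals all_analysis.
From mathcomp Require Import ring lra.
Import Order.TTheory GRing.Theory Num.Theory.
Import numFieldNormedType.Exports.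
Local Open Scope classical_set_scope.
Local Open Scope ring_scope.
Set Implicit Arguments. Unset Strict Implicit. Unset Printing Implicit Defensive.

Lemma mul_diag_mxE (R : pzRingType) m n (D : 'M[R]_m) (A : 'M[R]_(m, n)) i j :
  is_diag_mx D -> (D *m A) i j = D i i * A i j.
Proof.
move/is_diag_mxP => hD; rewrite mxE (bigD1 i) //= big1 ?addr0 // => k ki.
by rewrite hD ?mul0r // eq_sym.
Qed.

Lemma diag_mx_formE (R : pzRingType) n (D : 'M[R]_n) (u w : 'cV[R]_n) :
  is_diag_mx D -> (u^T *m D *m w) ord0 ord0 = \sum_l u l ord0 * (D l l * w l ord0).
Proof.
by move=> hD; rewrite -mulmxA mxE; apply: eq_bigr => l _; rewrite mul_diag_mxE // mxE.
Qed.

Lemma posdef_diag_gt0 (R : realType) n (D : 'M[R]_n) l :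
  is_diag_mx D -> posdef D -> 0 < D l l.
Proof.
move=> hD /(_ (delta_mx l ord0)); rewrite diag_mx_formE // (bigD1 l) //= big1 ?addr0.
- rewrite !mxE !eqxx mul1r mulr1; apply; apply/negP => /eqP/matrixP/(_ l ord0).
  by rewrite !mxE !eqxx => /eqP; rewrite oner_eq0.
- by move=> k kl; rewrite !mxE (negbTE kl) mul0r.
Qed.

Lemma ler_sum_term (R : numDomainType) (I : finType) (F : I -> R) :
  (forall i, 0 <= F i) -> forall i, F i <= \sum_j F j.
Proof. by move=> F0 i; rewrite (bigD1 i) //= lerDl sumr_ge0. Qed.

Lemma ex_pos_lbound (R : numFieldType) (I : finType) (u : I -> R) :
  (forall i, 0 < u i) -> exists2 m, 0 < m & forall i, m <= u i.
Proof.
move=> u0; have inv0 i : 0 <= (u i)^-1 by rewrite invr_ge0 ltW.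
have S0 : 0 < 1 + \sum_i (u i)^-1 by rewrite ltr_wpDr ?sumr_ge0.
exists (1 + \sum_i (u i)^-1)^-1; first by rewrite invr_gt0.
move=> i; rewrite -[u i]invrK lef_pV2 ?posrE ?invr_gt0 //.
by rewrite ler_wpDl // (ler_sum_term inv0).
Qed.

Lemma ex_ubound (R : realDomainType) (I : finType) (u : I -> R) :
  exists2 M, 0 <= M & forall i, u i <= M.
Proof.
exists (\sum_i `|u i|); first exact: sumr_ge0.
by move=> i; apply: le_trans (ler_norm _) (ler_sum_term _ i) => j; exact: normr_ge0.
Qed.

Lemma norm_cross_le (R : realDomainType) (q d e V : R) :
  0 <= q -> q * d ^+ 2 <= V -> q * e ^+ 2 <= V -> `|q * d * e| <= V.
Proof.
move=> q0 hd he; rewrite ler_norml.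
have := mulr_ge0 q0 (sqr_ge0 (d + e)); have := mulr_ge0 q0 (sqr_ge0 (d - e)).
by move=> *; apply/andP; split; nra.
Qed.

Lemma is_derive_sumr (R : realType) m (F : 'I_m -> R -> R) (dF : 'I_m -> R) (t : R) :
  (forall i, is_derive t 1 (F i) (dF i)) ->
  is_derive t 1 (fun s => \sum_(i < m) F i s) (\sum_(i < m) dF i).
Proof. by move=> hF; rewrite -fct_sumE; exact: is_derive_sum. Qed.

Lemma within_continuous_sumr (R : realType) (A : set R) m (F : 'I_m -> R -> R) :
  (forall i, {within A, continuous (F i)}) ->
  {within A, continuous (fun s => \sum_(i < m) F i s)}.
Proof. by move=> hF; apply: continuous_big => [|i _]; [exact: add_continuous | exact: hF]. Qed.

Lemma is_derive_coord (R : realType) m n (M : R -> 'M[R]_(m, n)) (t : R) D i j :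
  is_derive t 1 M D -> is_derive t 1 (fun s => M s i j) (D i j).
Proof.
move=> [dM DE]; have := (derivable_mxP M t 1).1 dM i j => dMij.
by apply: DeriveDef => //; rewrite -DE derive_mx // mxE.
Qed.

Lemma within_continuous_coord (R : realType) (A : set R) m n (M : R -> 'M[R]_(m, n)) i j :
  {within A, continuous M} -> {within A, continuous (fun s => M s i j)}.
Proof.
move=> hM x; apply: (@continuous_comp (subspace A) _ _ M (fun B : 'M[R]_(m, n) => B i j) x (hM x)).
exact: coord_continuous.
Qed.

Lemma is_derive_scaled_sqr_diff (R : realType) (u w : R -> R) (du dw c t : R) :
  is_derive t 1 u du -> is_derive t 1 w dw ->
  is_derive t 1 (fun s => c * (u s - w s) ^+ 2) (c * (2 * (u t - w t) * (du - dw))).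
Proof.
move=> hu hw; have := is_deriveZ c (is_deriveX 2 (is_deriveB hu hw)).
have -> : c \*: (u - w) ^+ 2 = (fun s => c * (u s - w s) ^+ 2).
  by apply/funext => s; rewrite /= !fctE.
by move/is_derive_eq; apply; rewrite /GRing.scale /= !fctE expr1 mulrA.
Qed.

Lemma cvg_sumr (R : realType) (T : Type) (F : set_system T) {FF : Filter F} m
    (u : 'I_m -> T -> R) (a : 'I_m -> R) :
  (forall i, u i x @[x --> F] --> a i) -> \sum_(i < m) u i x @[x --> F] --> \sum_(i < m) a i.
Proof. by move=> hu; apply: cvg_big => [|i _]; [exact: add_continuous | exact: hu]. Qed.

Section Disagreement.
Variables (R : realType) (N n : nat) (Qm : 'M[R]_n).
Hypothesis Qm_ge0 : forall l, 0 <= Qm l l.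
Implicit Types y dy : 'I_N -> 'cV[R]_n.

Definition disagreement (y : 'I_N -> 'cV[R]_n) : R :=
  \sum_(i < N) \sum_(j < N) \sum_(l < n) Qm l l * (y i l ord0 - y j l ord0) ^+ 2.

Definition disagreement_rate (y dy : 'I_N -> 'cV[R]_n) : R :=
  \sum_(i < N) \sum_(j < N) \sum_(l < n)
    Qm l l * (2 * (y i l ord0 - y j l ord0) * (dy i l ord0 - dy j l ord0)).

Lemma disagreement_term_le y i j l :
  Qm l l * (y i l ord0 - y j l ord0) ^+ 2 <= disagreement y.
Proof.
have term_ge0 i' j' l' : 0 <= Qm l' l' * (y i' l' ord0 - y j' l' ord0) ^+ 2.
  by rewrite mulr_ge0 ?sqr_ge0.
apply: le_trans (ler_sum_term _ i); last by move=> *; do 2!apply: sumr_ge0 => *.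
apply: le_trans (ler_sum_term _ j); last by move=> *; apply: sumr_ge0 => *.
exact: ler_sum_term.
Qed.

Lemma disagreement_ge0 y : 0 <= disagreement y.
Proof. by do 3!apply: sumr_ge0 => *; rewrite mulr_ge0 ?sqr_ge0. Qed.

Lemma is_derive_disagreement (x : R -> 'I_N -> 'cV[R]_n) (dx : 'I_N -> 'cV[R]_n) (t : R) :
  (forall i, is_derive t 1 (fun s => x s i) (dx i)) ->
  is_derive t 1 (fun s => disagreement (x s)) (disagreement_rate (x t) dx).
Proof.
move=> hx; do 3!apply: is_derive_sumr => ?.
have hd i l : is_derive t 1 (fun s => x s i l ord0) (dx i l ord0).
  exact: is_derive_coord.
exact: is_derive_scaled_sqr_diff.
Qed.

Lemma within_continuous_disagreement (A : set R) (x : R -> 'I_N -> 'cV[R]_n) :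
  (forall i, {within A, continuous (fun t => x t i)}) ->
  {within A, continuous (fun t => disagreement (x t))}.
Proof.
move=> hx; apply: within_continuous_sumr => i; apply: within_continuous_sumr => j.
apply: within_continuous_sumr => l s.
have hd : {for s, continuous ((fun t => x t i l ord0 - x t j l ord0) : subspace A -> R)}.
  by apply: continuousB; apply: within_continuous_coord.
exact: continuousM (cvg_cst _) (continuousM hd hd).
Qed.

Lemma disagreement_le_enorm y :
  disagreement y <= (\sum_l Qm l l) * \sum_i \sum_j enorm (y i - y j) ^+ 2.
Proof.
rewrite mulr_sumr; apply: ler_sum => i _; rewrite mulr_sumr; apply: ler_sum => j _.
rewrite /enorm sqr_sqrtr ?sumr_ge0 // => [|*]; last exact: sqr_ge0.
rewrite mulr_sumr; apply: ler_sum => l _; rewrite !mxE.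
by rewrite ler_wpM2r ?sqr_ge0 // (ler_sum_term Qm_ge0).
Qed.

Lemma disagreement_cvg0 (x : R -> 'I_N -> 'cV[R]_n) :
  (forall i j, (fun t => enorm (x t i - x t j)) @ +oo --> (0 : R)) ->
  (fun t => disagreement (x t)) @ +oo --> (0 : R).
Proof.
move=> hx; apply: (squeeze_cvgr (h := fun t => (\sum_l Qm l l) *
    \sum_i \sum_j enorm (x t i - x t j) ^+ 2) _ (cvg_cst 0)).
- by near=> t; rewrite disagreement_ge0 disagreement_le_enorm.
rewrite -[X in _ --> X](mulr0 (\sum_l Qm l l)); apply: cvgMl_tmp.
rewrite [X in _ --> X](_ : _ = \sum_(i < N) \sum_(j < N) 0 * 0); last first.
  by rewrite big1 // => i _; rewrite big1 // => j _; rewrite mulr0.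
apply: cvg_sumr => i; apply: cvg_sumr => j.
under eq_cvg do rewrite expr2.
exact: cvgM.
Unshelve. all: by end_near.
Qed.

End Disagreement.

Lemma nondecreasing_from_local (R : archiRealFieldType) (V : R -> R) (d : R) : 0 < d ->
  (forall u w, 0 <= u -> u <= w -> w - u < d -> V u <= V w) ->
  forall u w, 0 <= u -> u <= w -> V u <= V w.
Proof.
move=> d0 hloc.
suff hk k u w : 0 <= u -> u <= w -> w - u <= k%:R * (d / 2) -> V u <= V w.
  move=> u w u0 uw; apply: (hk (Num.truncn ((w - u) / (d / 2))).+1) => //.
  by rewrite -ler_pdivrMr ?divr_gt0 // ltW // truncnS_gt.
elim: k u w => [|k IH] u w u0 uw.
  by rewrite mul0r => wu; rewrite (@le_anti _ _ u w) ?uw //=; lra.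
move=> wuk; have [short|long] := lerP (w - u) (d / 2).
  by apply: hloc => //; lra.
have vw : V (w - d / 2) <= V w by apply: hloc; lra.
apply: le_trans vw; apply: IH; rewrite -addn1 natrD mulrDl mul1r in wuk; lra.
Qed.

Section MonotoneAcrossSwitches.
Variables (R : realType) (V : R -> R) (S : set R) (d : R).
Hypothesis V_cont : {within [set t | 0 <= t], continuous V}.
Hypothesis V_deriv_ge0 : forall t, 0 < t -> ~ S t -> exists2 dV, is_derive t 1 V dV & 0 <= dV.
Hypothesis S_dwell : forall s1 s2, S s1 -> S s2 -> s1 < s2 -> d <= s2 - s1.

Lemma le_between_switches u w : 0 <= u -> u < w -> (forall t, u < t -> t < w -> ~ S t) ->
  V u <= V w.
Proof.
move=> u0 uw noS.
have hder t : t \in `]u, w[ -> is_derive t 1 V ('D_1 V t).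
  rewrite in_itv /= => /andP[ut tw].
  by have [dV hdV _] := V_deriv_ge0 (le_lt_trans u0 ut) (noS t ut tw); rewrite derive_val.
have hcont : {within `[u, w], continuous V}.
  apply: continuous_subspaceW V_cont => z /=; rewrite in_itv /= => /andP[uz _].
  exact: le_trans uz.
rewrite -subr_ge0; have [c + ->] := MVT uw hder hcont; rewrite in_itv /= => /andP[uc cw].
have [dV hdV dV0] := V_deriv_ge0 (le_lt_trans u0 uc) (noS c uc cw).
by rewrite derive_val mulr_ge0 // subr_ge0 ltW.
Qed.

Lemma le_within_dwell u w : 0 <= u -> u <= w -> w - u < d -> V u <= V w.
Proof.
move=> u0; rewrite le_eqVlt => /orP[/eqP -> //|uw] short.
(* an interval shorter than [d] contains at most one switching instant *)
have [[s [us sw Ss]]|noS] := pselect (exists s, [/\ u < s, s < w & S s]).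
  apply: (@le_trans _ _ (V s)); apply: le_between_switches => //; try lra.
  - by move=> t ut ts St; have := S_dwell St Ss ts; lra.
  - by move=> t st tw St; have := S_dwell Ss St st; lra.
by apply: le_between_switches => // t ut tw St; apply: noS; exists t.
Qed.

End MonotoneAcrossSwitches.

Section CoupledSystem.
Variables (R : realType) (N n Qn : nat) (f : 'cV[R]_n -> 'cV[R]_n).
Variables (Gamma Qm Sg : 'M[R]_n) (a : 'I_Qn -> 'I_N -> 'I_N -> R) (sigma : R -> 'I_Qn).
Variables (m M phi : R).
Hypotheses (Gamma_diag : is_diag_mx Gamma) (Qm_diag : is_diag_mx Qm) (Sg_diag : is_diag_mx Sg).
Hypothesis f_QUAD : forall x y : 'cV[R]_n,
  0 <= ((x - y)^T *m Qm *m (f x - f y - Sg *m x + Sg *m y)) ord0 ord0.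
Hypotheses (Qm_ge0 : forall l, 0 <= Qm l l) (Sg_ge : forall l, m <= Sg l l).
Hypotheses (a_ge0 : forall k i j, 0 <= a k i j) (Gamma_ge0 : forall l, 0 <= Gamma l l).
Hypothesis aGamma_le : forall k i j l, a k i j * Gamma l l <= M.
Hypothesis phi_ge0 : 0 <= phi.
Implicit Types y : 'I_N -> 'cV[R]_n.

Local Notation coupling y t i l :=
  (\sum_(k < N) a (sigma t) i k * (Gamma l l * (y k l ord0 - y i l ord0))).

Lemma rhs_coordE y t i l :
  rhs f Gamma a sigma phi y t i l ord0 = f (y i) l ord0 + phi * coupling y t i l.
Proof.
rewrite !mxE summxE; congr (_ + _ * _); apply: eq_bigr => k _.
by rewrite mxE mul_diag_mxE // !mxE.
Qed.

Lemma QUAD_lower y i j :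
  m * \sum_l Qm l l * (y i l ord0 - y j l ord0) ^+ 2 <=
  \sum_l Qm l l * (y i l ord0 - y j l ord0) * (f (y i) l ord0 - f (y j) l ord0).
Proof.
have := f_QUAD (y i) (y j); rewrite diag_mx_formE // => hQ.
rewrite -subr_ge0 mulr_sumr -sumrB; apply: le_trans hQ _; apply: ler_sum => l _.
have Sg_entry (v : 'cV[R]_n) : \sum_k Sg l k * v k ord0 = Sg l l * v l ord0.
  by rewrite -(mul_diag_mxE v l ord0 Sg_diag) mxE.
rewrite !mxE !Sg_entry.
have : 0 <= (Sg l l - m) * (Qm l l * (y i l ord0 - y j l ord0) ^+ 2).
  by apply: mulr_ge0; rewrite ?subr_ge0 // mulr_ge0 ?sqr_ge0.
lra.
Qed.

Lemma coupling_cross_le y t i p l :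
  `|Qm l l * (y p l ord0 - y i l ord0) * coupling y t i l| <=
  N%:R * M * disagreement Qm y.
Proof.
rewrite mulr_sumr; apply: le_trans (ler_norm_sum _ _ _) _.
have -> : N%:R * M * disagreement Qm y = \sum_(k < N) M * disagreement Qm y.
  by rewrite sumr_const card_ord -mulrA mulr_natl.
apply: ler_sum => k _.
set e := y p l ord0 - y i l ord0; set e' := y k l ord0 - y i l ord0.
have -> : Qm l l * e * (a (sigma t) i k * (Gamma l l * e')) =
    a (sigma t) i k * Gamma l l * (Qm l l * e * e') by ring.
rewrite normrM ger0_norm ?mulr_ge0 //.
apply: ler_pM; rewrite ?mulr_ge0 ?normr_ge0 //.
by apply: norm_cross_le; rewrite ?disagreement_term_le.
Qed.

Lemma disagreement_rate_ge y t :
  2 * (m - phi * (2 * M * N%:R ^+ 3 * n%:R)) * disagreement Qm y <=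
  disagreement_rate Qm y (rhs f Gamma a sigma phi y t).
Proof.
(* QUAD yields [2 m V]; each of the [N ^ 2 * n] coupling terms is at least [- 4 phi N M V]. *)
set V := disagreement Qm y; set B := N%:R * M * V.
have sum_cst k (c : R) : \sum_(i < k) c = k%:R * c by rewrite sumr_const card_ord mulr_natl.
have hterm i j l : 2 * (Qm l l * (y i l ord0 - y j l ord0) * (f (y i) l ord0 - f (y j) l ord0))
    - 2 * phi * (2 * B) <=
    Qm l l * (2 * (y i l ord0 - y j l ord0) *
      (rhs f Gamma a sigma phi y t i l ord0 - rhs f Gamma a sigma phi y t j l ord0)).
  rewrite !rhs_coordE; set e := y i l ord0 - y j l ord0.
  have := coupling_cross_le y t j i l; have := coupling_cross_le y t i j l.
  rewrite -/V -/B -/e -opprB -/e mulrN mulNr normrN !ler_norml => /andP[ci1 _] /andP[_ cj2].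
  have : 0 <= phi * (Qm l l * e * coupling y t i l - Qm l l * e * coupling y t j l + 2 * B).
    by apply: mulr_ge0 => //; lra.
  lra.
have hpair i j : 2 * m * (\sum_l Qm l l * (y i l ord0 - y j l ord0) ^+ 2) - n%:R * (2 * phi * (2 * B)) <=
    \sum_l Qm l l * (2 * (y i l ord0 - y j l ord0) *
      (rhs f Gamma a sigma phi y t i l ord0 - rhs f Gamma a sigma phi y t j l ord0)).
  apply: le_trans (ler_sum _ (fun l _ => hterm i j l)).
  rewrite sumrB sum_cst -mulr_sumr.
  have := QUAD_lower y i j; lra.
apply: le_trans (ler_sum _ (fun i _ => ler_sum _ (fun j _ => hpair i j))).
under eq_bigr => i _ do rewrite sumrB sum_cst -mulr_sumr.
rewrite sumrB sum_cst -mulr_sumr -/(disagreement Qm y) -/V /B.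
lra.
Qed.

Lemma disagreement_nondecreasing Tmin x :
  dwell_signal sigma Tmin -> phi * (2 * M * N%:R ^+ 3 * n%:R) <= m ->
  is_solution f Gamma a sigma phi x ->
  forall u w, 0 <= u -> u <= w -> disagreement Qm (x u) <= disagreement Qm (x w).
Proof.
move=> [Tmin_gt0 _ _ dwell] phi_small [x_cont x_deriv].
pose W t := disagreement Qm (x t).
apply: (nondecreasing_from_local (V := W) Tmin_gt0) => u w.
apply: (le_within_dwell (V := W) (S := switching_instant sigma)) => // [|t t_gt0 t_reg].
  exact: within_continuous_disagreement.
exists (disagreement_rate Qm (x t) (rhs f Gamma a sigma phi (x t) t)).
  by apply: is_derive_disagreement => i; exact: x_deriv.
apply: le_trans (disagreement_rate_ge (x t) t).
by rewrite !mulr_ge0 ?disagreement_ge0 // subr_ge0.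
Qed.

End CoupledSystem.

Theorem theorem6 (R : realType) (N n Qn : nat) (hN : (2 <= N)%N) (hn : (1 <= n)%N)
  (a : 'I_Qn -> 'I_N -> 'I_N -> R)
  (ha_nonneg : forall k i j, 0 <= a k i j) (ha_diag : forall k i, a k i i = 0)
  (sigma : R -> 'I_Qn) (Tmin : R) (hsigma : dwell_signal sigma Tmin)
  (T : R) (hT : 0 < T)
  (hconn : forall t0 : R, 0 <= t0 -> has_spanning_tree (union_edge a sigma t0 T))
  (f : 'cV[R]_n -> 'cV[R]_n) (hf : continuous f)
  (Gamma : 'M[R]_n) (hGd : is_diag_mx Gamma) (hGp : posdef Gamma)
  (Qm Sg : 'M[R]_n) (hQd : is_diag_mx Qm) (hQp : posdef Qm)
  (hSd : is_diag_mx Sg) (hSp : posdef Sg)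
  (hQUAD : forall x y : 'cV[R]_n,
      0 <= ((x - y)^T *m Qm *m (f x - f y - Sg *m x + Sg *m y)) ord0 ord0) :
  exists2 phis : R, 0 < phis &
    forall phi : R, 0 < phi -> phi < phis -> ~ synchronizes f Gamma a sigma phi.
Proof.
have Qm_ge0 l : 0 <= Qm l l by rewrite ltW // posdef_diag_gt0.
have Gamma_ge0 l : 0 <= Gamma l l by rewrite ltW // posdef_diag_gt0.
have [m m_gt0 Sg_ge] := ex_pos_lbound (fun l => posdef_diag_gt0 l hSd hSp).
have [M M_ge0 aGamma_le] := ex_ubound
  (fun p : 'I_Qn * 'I_N * 'I_N * 'I_n => a p.1.1.1 p.1.1.2 p.1.2 * Gamma p.2 p.2).
have {}aGamma_le k i j l : a k i j * Gamma l l <= M := aGamma_le (k, i, j, l).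
pose K := 2 * M * N%:R ^+ 3 * n%:R.
have K_ge0 : 0 <= K by rewrite !mulr_ge0.
exists (m / (K + 1)); first by rewrite divr_gt0 // ltr_wpDl.
move=> phi phi_gt0; rewrite ltr_pdivlMr ?ltr_wpDl // => phi_lt [solvable sync].
have phiK : phi * K <= m by rewrite mulrDr mulr1 in phi_lt; lra.
pose x0 (i : 'I_N) : 'cV[R]_n := if val i == 0%N then const_mx 1 else 0.
have [x [x_sol x_init]] := solvable x0.
pose W t := disagreement Qm (x t).
have W_mono := disagreement_nondecreasing hGd hQd hSd hQUAD Qm_ge0 Sg_ge ha_nonneg
  Gamma_ge0 aGamma_le (ltW phi_gt0) hsigma phiK x_sol.
have W0_gt0 : 0 < W 0.
  apply: lt_le_trans (disagreement_term_le Qm_ge0 _ (Ordinal (ltnW hN)) (Ordinal hN) (Ordinal hn)).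
  by rewrite x_init /x0 /= !mxE subr0 expr1n mulr1 posdef_diag_gt0.
have W_cvg0 : W t @[t --> +oo] --> 0 by apply: disagreement_cvg0 => //; exact: sync.
have [t [t_ge0 Wt_lt]] :=
  filter_ex (filterI (nbhs_pinfty_ge (real0 R)) (cvgr_lt 0 W_cvg0 (W 0) W0_gt0)).
by have := W_mono 0 t (lexx 0) t_ge0; rewrite leNgt Wt_lt.
Qed.
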